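(* Let $R$ be an integral domain with fraction field $K$. Suppose that $R$ contains an element having two inequivalent factorizations into irreducibles, and that every element of $R$ which is not a square in $R$ is also not a square in $K$. Then there exists a polynomial $f\in R[x]$ of degree $4$ that is indecomposable over $R$ but decomposable over $K$.
   Context: For a ring $A$ and $f\in A[x]$ with $\deg f\ge 2$, $f$ is called decomposable over $A$ if $f(x)=g(h(x))$ for some $g,h\in A[x]$ of degree at least $2$, and indecomposable over $A$ otherwise. Two factorizations of an element into irreducibles are inequivalent if there is no bijection between the irreducible factors of the first and those of the second such that corresponding irreducibles are unit multiples of one another. *)

From HB Require Import structures.
From mathcomp Require Import all_boot all_order all_algebra all_fingroup.
Set Implicit Arguments. Unset Strict Implicit. Unset Printing Implicit Defensive.
Import GRing.Theory.
Local Open Scope ring_scope.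

Definition irreducible_elt (R : idomainType) (a : R) : Prop :=
  a != 0 /\ a \isn't a GRing.unit /\
  forall b c : R, a = b * c -> b \is a GRing.unit \/ c \is a GRing.unit.

Definition unit_multiple (R : idomainType) (a b : R) : Prop :=
  exists2 u : R, u \is a GRing.unit & a = u * b.

Definition is_factorization (R : idomainType) (r : R) (s : seq R) : Prop :=
  (forall a, a \in s -> irreducible_elt a) /\ r = \prod_(a <- s) a.

Definition equiv_factorizations (R : idomainType) (s t : seq R) : Prop :=
  size s = size t /\
  exists sigma : 'S_(size s),
    forall i : 'I_(size s), unit_multiple (nth 0 s i) (nth 0 t (sigma i)).

Definition decomposable (A : idomainType) (f : {poly A}) : Prop :=
  exists g h : {poly A}, (2 < size g)%N /\ (2 < size h)%N /\ f = g \Po h.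

Definition indecomposable (A : idomainType) (f : {poly A}) : Prop :=
  (2 < size f)%N /\ ~ decomposable f.

(* 1. Non-unique factorization produces irreducibles p, c and b in R with
      p | b c, p ∤ b, p ∤ c; otherwise the usual induction proves uniqueness.
   2. From these we choose Y with p ∤ Y and p | Y c, i.e. Y c = p n; in
      characteristic 2 the choice (among b, c and b + p c) must moreover avoid
      a degenerate solution x of c = x (x + Y)  (predicate [good_shift]).
   3. The quartic f = (p X^2 + Y X)^2 + c X^2 + n X is g ∘ (p X^2 + Y X) over K,
      where g = X^2 + (c/p) X.
   4. Over R, a decomposition f = G ∘ H forces G and H to be quadratic.
      Comparing coefficients, and extracting a square root of the leading
      coefficient of G in R, gives B, T in R with B^2 + T = Y^2 + c, B T = Y c,
      2 B = 2 Y and p | B or p | T, which contradicts the choice of Y. *)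

From HB Require Import structures.
From mathcomp Require Import all_boot all_order all_algebra all_fingroup.
From mathcomp Require Import ring zify.
From Stdlib Require Import Classical.
Set Implicit Arguments. Unset Strict Implicit. Unset Printing Implicit Defensive.
Import GRing.Theory.
Local Open Scope ring_scope.

Definition squares_descend (R : idomainType) : Prop :=
  forall a : R, (exists k : {fraction R}, tofrac a = k ^+ 2) -> exists b, a = b ^+ 2.

Definition divides (R : idomainType) (p x : R) : Prop := exists k, x = p * k.

Lemma divides_mul_unit (R : idomainType) (p a u : R) :
  u \is a GRing.unit -> divides p (a * u) -> divides p a.
Proof. by move=> uu [k hk]; exists (k * u^-1); rewrite mulrA -hk mulrK. Qed.

Lemma irreducible_ndvd_unit (R : idomainType) (p u : R) :
  irreducible_elt p -> u \is a GRing.unit -> ~ divides p u.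
Proof.
move=> [_ [pnu _]] uu [k hk]; move/negP: pnu; apply.
by move: uu; rewrite hk unitrM => /andP[].
Qed.

Fixpoint pairwise_associated (R : idomainType) (s t : seq R) : Prop :=
  match s, t with
  | [::], [::] => True
  | a :: s', b :: t' => unit_multiple a b /\ pairwise_associated s' t'
  | _, _ => False
  end.

Lemma equiv_of_associated_perm (R : idomainType) (s t t' : seq R) :
  perm_eq t t' -> pairwise_associated s t' -> equiv_factorizations s t.
Proof.
have nth_assoc : forall s t' : seq R, pairwise_associated s t' ->
    size s = size t' /\
    forall i, (i < size s)%N -> unit_multiple (nth 0 s i) (nth 0 t' i).
  elim=> [|a s0 IH] [|b t0] //= [hab /IH [hs hi]].
  by split=> [|[|i] //= /hi]; rewrite ?hs.
move=> hp /nth_assoc [hs hi].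
have sz : size t == size s by rewrite (perm_size hp) hs.
split; first by rewrite (perm_size hp).
have /tuple_permP [sigma hsigma] : perm_eq t' (Tuple sz) by rewrite perm_sym.
exists sigma => i; have := hi i (ltn_ord i).
by rewrite hsigma -tnth_nth tnth_mktuple (tnth_nth 0).
Qed.

Section UniqueFactorization.
Variable R : idomainType.
Hypothesis irreducible_prime : forall p b c : R,
  irreducible_elt p -> irreducible_elt c ->
  divides p (b * c) -> divides p b \/ divides p c.

Lemma irreducible_dvd_prod (p : R) (t : seq R) :
  irreducible_elt p -> (forall q, q \in t -> irreducible_elt q) ->
  forall u, u \is a GRing.unit -> divides p (u * \prod_(q <- t) q) ->
  exists2 q, q \in t & divides p q.
Proof.
move=> pirr; elim: t => [|q t IH] ht u uu.
  by rewrite big_nil mulr1 => /(irreducible_ndvd_unit pirr uu).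
rewrite big_cons (_ : u * _ = (u * \prod_(j <- t) j) * q); last by ring.
case/(irreducible_prime pirr (ht q (mem_head _ _))) => [h|h].
- have [z zt hz] := IH (fun z zt => ht z (@mem_behead _ (q :: t) z zt)) u uu h.
  by exists z; rewrite // in_cons zt orbT.
- by exists q; rewrite ?mem_head.
Qed.

Lemma factorization_unique (s : seq R) :
  (forall a, a \in s -> irreducible_elt a) ->
  forall (t : seq R) u, u \is a GRing.unit ->
  (forall a, a \in t -> irreducible_elt a) ->
  \prod_(a <- s) a = u * \prod_(a <- t) a ->
  exists t', perm_eq t t' /\ pairwise_associated s t'.
Proof.
elim: s => [|a s IH] hs t u uu ht.
  case: t ht => [|q t] ht; first by exists [::].
  rewrite big_nil big_cons => h; exfalso.
  apply: (irreducible_ndvd_unit (ht q (mem_head _ _)) (unitr1 R)).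
  by exists (u * \prod_(j <- t) j); rewrite mulrCA -h.
rewrite big_cons => h; have airr := hs a (mem_head _ _).
have [q qt [k hk]] : exists2 q, q \in t & divides a q.
  by apply: (irreducible_dvd_prod airr ht uu); exists (\prod_(j <- s) j).
have ku : k \is a GRing.unit.
  have [_ [_ qirr]] := ht q qt; have [_ [anu _]] := airr.
  by case: (qirr _ _ hk) => // au; move/negP: anu.
have hrest : \prod_(j <- s) j = (u * k) * \prod_(j <- rem q t) j.
  apply: (mulfI (proj1 airr)); rewrite h.
  have -> : \prod_(j <- t) j = q * \prod_(j <- rem q t) j.
    by rewrite (perm_big _ (perm_to_rem qt)) big_cons.
  by rewrite hk; ring.
have uk : u * k \is a GRing.unit by rewrite unitrM uu ku.
have [t'' [hp hr]] :=
  IH (fun z zs => hs z (@mem_behead _ (a :: s) z zs)) (rem q t) (u * k) uk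
     (fun z zr => ht z (mem_rem zr)) hrest.
exists (q :: t''); split; first by rewrite (perm_trans (perm_to_rem qt)) ?perm_cons.
by split=> //; exists k^-1; rewrite ?unitrV // hk mulrC mulrK.
Qed.

End UniqueFactorization.

Lemma irreducible_not_prime (R : idomainType) :
  (exists (r : R) (s t : seq R),
      is_factorization r s /\ is_factorization r t /\ ~ equiv_factorizations s t) ->
  exists p b c : R, [/\ irreducible_elt p, irreducible_elt c,
    ~ divides p b, ~ divides p c & divides p (b * c)].
Proof.
move=> [r [s [t [[hs rs] [[ht rt] not_equiv]]]]].
apply: NNPP => no_witness; apply: not_equiv.
have prime : forall p b c : R, irreducible_elt p -> irreducible_elt c ->
    divides p (b * c) -> divides p b \/ divides p c.
  move=> p b c pirr cirr hbc; apply: NNPP => hn; apply: no_witness.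
  by exists p, b, c; split=> // h; apply: hn; [left | right].
have [|t' [hp hr]] := factorization_unique prime hs (unitr1 R) ht.
  by rewrite -rs rt mul1r.
exact: equiv_of_associated_perm hp hr.
Qed.

(* In characteristic 2 the coefficient comparison of step 4 leaves a case
   c = x (x + Y) with p | Y (Y + x), which Y must exclude. *)
Definition good_shift (R : idomainType) (p Y c : R) : Prop :=
  2%:R != 0 :> R \/ forall x, c = x * (x + Y) -> ~ divides p (Y * (Y + x)).

(* For c irreducible, a factorization c = x (x + Y) with p | Y (Y + x) forces
   x to be a unit (else x + Y is a unit and p | Y). *)
Lemma good_shift_of_no_unit_root (R : idomainType) (p Y c : R) :
  irreducible_elt c -> ~ divides p Y ->
  ~ (exists2 x, x \is a GRing.unit & c = x * (x + Y)) ->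
  forall x, c = x * (x + Y) -> ~ divides p (Y * (Y + x)).
Proof.
move=> [_ [_ cirr]] hY no_root x hx hd.
have [xu|xYu] := cirr _ _ hx; first by apply: no_root; exists x.
by apply: hY; apply: (divides_mul_unit xYu); rewrite addrC.
Qed.

(* c = x (x + c) with x a unit would make c = x^2 (1 - x)^-1 a unit. *)
Lemma no_unit_root_self (R : idomainType) (c : R) :
  irreducible_elt c -> ~ (exists2 x, x \is a GRing.unit & c = x * (x + c)).
Proof.
move=> [_ [cnu _]] [x xu hx]; move/negP: cnu; apply.
have hsq : x ^+ 2 = c * (1 - x) by rewrite mulrBr mulr1 {1}hx; ring.
have : c * (1 - x) \is a GRing.unit by rewrite -hsq unitrX.
by rewrite unitrM => /andP[].
Qed.

(* In characteristic 2, if p | c^2 fails, the shifts b and b + p c cannot both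
   admit unit roots: comparing the two roots x, y produces a factorization of p
   with a unit factor, giving p | c^2 or p | c. *)
Lemma char2_unit_roots_absurd (R : idomainType) (p b c n x y : R) :
  2%:R = 0 :> R -> irreducible_elt p -> c != 0 ->
  ~ divides p c -> ~ divides p (c * c) -> b * c = p * n ->
  x \is a GRing.unit -> c = x * (x + b) ->
  y \is a GRing.unit -> c = y * (y + (b + p * c)) -> False.
Proof.
move=> two [_ [_ pirr]] c0 hc hcc hn xu cx yu cy.
pose ka := y^-1 - x^-1 - p; pose nu := c * ka + b + p * c.
have y_eq : y = x + c * ka.
  have cyi : c * y^-1 = y + (b + p * c) by rewrite {1}cy mulrC mulKr.
  have cxi : c * x^-1 = x + b by rewrite {1}cx mulrC mulKr.
  have -> : c * ka = c * y^-1 - c * x^-1 - p * c by rewrite /ka; ring.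
  by rewrite cyi cxi; ring.
have ka_nu : ka * nu = - (x * p).
  have : c * (ka * nu + x * p + 2%:R * x * ka) = 0.
    have -> : c * (ka * nu + x * p + 2%:R * x * ka) =
              y * (y + (b + p * c)) - x * (x + b) by rewrite y_eq /nu; ring.
    by rewrite -cy -cx subrr.
  move/eqP; rewrite mulf_eq0 (negPf c0) two !mul0r addr0 => /eqP h.
  by apply/eqP; rewrite -subr_eq0 opprK h.
have p_eq : p = ka * (- (nu * x^-1)).
  apply: (mulrI xu).
  rewrite (_ : x * (ka * - (nu * x^-1)) = - (ka * nu) * (x * x^-1)); last by ring.
  by rewrite ka_nu opprK divrr // mulr1 mulrC.
have [kau|nxu] := pirr _ _ p_eq.
- apply: hcc; apply: (@divides_mul_unit _ _ _ (ka * ka)); first by rewrite unitrM kau.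
  exists (- (x * c) - ka * n - c * c * ka); apply/eqP; rewrite -subr_eq0.
  have -> : c * c * (ka * ka) - p * (- (x * c) - ka * n - c * c * ka)
     = c * (ka * nu + x * p) - ka * (b * c - p * n) by rewrite /nu; ring.
  by rewrite ka_nu hn addNr subrr !mulr0 subr0.
- have nuu : nu \is a GRing.unit.
    have -> : nu = - (- (nu * x^-1)) * x by rewrite opprK mulrVK.
    by rewrite unitrM unitrN nxu xu.
  apply: hc; apply: (@divides_mul_unit _ _ _ (nu * nu)); first by rewrite unitrM nuu.
  exists (- (c * c * x) + n * nu + c * c * nu); apply/eqP; rewrite -subr_eq0.
  have -> : c * (nu * nu) - p * (- (c * c * x) + n * nu + c * c * nu)
     = nu * (b * c - p * n) + c * c * (ka * nu + x * p) by rewrite /nu; ring.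
  by rewrite ka_nu hn subrr addNr !mulr0 addr0.
Qed.

(* From a non-prime irreducible p (p | b c, p ∤ b, p ∤ c, c irreducible) we
   find Y with p ∤ Y, p | Y c and [good_shift p Y c]: Y = b in characteristic
   other than 2; otherwise Y = c if p | c^2, and else Y = b or Y = b + p c. *)
Lemma good_shift_exists (R : idomainType) (p b c : R) :
  irreducible_elt p -> irreducible_elt c ->
  ~ divides p b -> ~ divides p c -> divides p (b * c) ->
  exists Y, [/\ ~ divides p Y, divides p (Y * c) & good_shift p Y c].
Proof.
move=> pirr cirr hb hc [n hn].
have [two|two] := eqVneq (2%:R : R) 0; last by exists b; split=> //; [exists n | left].
have [hcc|ncc] := classic (divides p (c * c)).
  exists c; split=> //; right.
  exact: good_shift_of_no_unit_root cirr hc (no_unit_root_self cirr).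
have [[x xu cx]|no_root_b] :=
  classic (exists2 x, x \is a GRing.unit & c = x * (x + b)); last first.
  exists b; split=> //; first by exists n.
  by right; apply: good_shift_of_no_unit_root cirr hb no_root_b.
have hb' : ~ divides p (b + p * c).
  by move=> [k hk]; apply: hb; exists (k - c); rewrite mulrBr -hk; ring.
have [[y yu cy]|no_root_b'] :=
  classic (exists2 y, y \is a GRing.unit & c = y * (y + (b + p * c))).
  by case: (char2_unit_roots_absurd two pirr (proj1 cirr) hc ncc hn xu cx yu cy).
exists (b + p * c); split=> //; first by exists (n + c * c); rewrite mulrDl hn; ring.
by right; apply: good_shift_of_no_unit_root cirr hb' no_root_b'.
Qed.

Definition quartic (R : idomainType) (a4 a3 a2 a1 a0 : R) : {poly R} :=
  a4%:P * 'X^4 + a3%:P * 'X^3 + a2%:P * 'X^2 + a1%:P * 'X + a0%:P.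

Lemma quartic_coefs (R : idomainType) (a4 a3 a2 a1 a0 : R) :
  quartic a4 a3 a2 a1 a0 = \poly_(i < 5) [:: a0; a1; a2; a3; a4]`_i.
Proof.
apply/polyP => i; rewrite coef_poly /quartic !coefE.
by do 5?[case: i => [|i] /=]; ring.
Qed.

Lemma coef_quartic (R : idomainType) (a4 a3 a2 a1 a0 : R) :
  [/\ (quartic a4 a3 a2 a1 a0)`_4 = a4, (quartic a4 a3 a2 a1 a0)`_3 = a3,
      (quartic a4 a3 a2 a1 a0)`_2 = a2 & (quartic a4 a3 a2 a1 a0)`_1 = a1].
Proof. by rewrite quartic_coefs !coef_poly. Qed.

Lemma size_quartic (R : idomainType) (a4 a3 a2 a1 a0 : R) :
  a4 != 0 -> size (quartic a4 a3 a2 a1 a0) = 5%N.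
Proof. by move=> a40; rewrite quartic_coefs size_poly_eq. Qed.

Lemma quadratic_expand (R : idomainType) (G : {poly R}) : size G = 3%N ->
  G = (G`_2)%:P * 'X^2 + (G`_1)%:P * 'X + (G`_0)%:P.
Proof.
move=> sG; rewrite -{1}(coefK G) poly_def sG !big_ord_recr big_ord0 /= add0r.
by rewrite -!mul_polyC expr0 expr1 mulr1; ring.
Qed.

Lemma comp_quadratics (R : idomainType) (u v w al be ga : R) :
  (u%:P * 'X^2 + v%:P * 'X + w%:P) \Po (al%:P * 'X^2 + be%:P * 'X + ga%:P) =
  quartic (u * al^+2) (2%:R * u * al * be) (u * (be^+2 + 2%:R * al * ga) + v * al)
    (2%:R * u * be * ga + v * be) (u * ga^+2 + v * ga + w).
Proof. by rewrite !comp_polyD !comp_polyM !comp_polyC comp_polyX /quartic; ring. Qed.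

Lemma quartic_decomposition_sizes (R : idomainType) (f G H : {poly R}) :
  size f = 5%N -> f = G \Po H -> (2 < size G)%N -> (2 < size H)%N ->
  size G = 3%N /\ size H = 3%N.
Proof.
move=> sf fGH sG sH; have := size_comp_poly G H; rewrite -fGH sf /=.
by move: sG sH; case: (size G) => [|[|[|a]]] // _; case: (size H) => [|[|[|b]]] // _; nia.
Qed.

Definition witness (R : idomainType) (p Y e n : R) : {poly R} :=
  (p%:P * 'X^2 + Y%:P * 'X) ^+ 2 + (e%:P * 'X^2 + n%:P * 'X).

Lemma witness_quartic (R : idomainType) (p Y e n : R) :
  witness p Y e n = quartic (p ^+ 2) (2%:R * p * Y) (Y ^+ 2 + e) n 0.
Proof. by rewrite /witness /quartic; ring. Qed.

Lemma map_witness (R S : idomainType) (f : {rmorphism R -> S}) (p Y e n : R) :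
  map_poly f (witness p Y e n) = witness (f p) (f Y) (f e) (f n).
Proof. by rewrite /witness !rmorphD rmorphXn !rmorphD !rmorphM /= !map_polyC map_polyX. Qed.

Lemma size_witness (R : idomainType) (p Y e n : R) :
  p != 0 -> size (witness p Y e n) = 5%N.
Proof. by move=> p0; rewrite witness_quartic size_quartic // expf_neq0. Qed.

Lemma size_quadratic0 (R : idomainType) (a b : R) :
  a != 0 -> size (a%:P * 'X^2 + b%:P * 'X) = 3%N.
Proof.
move=> a0; rewrite (_ : a%:P * 'X^2 + b%:P * 'X = (a%:P * 'X + b%:P) * 'X); last by ring.
by rewrite size_mulX -?size_poly_eq0 size_MXaddC polyC_eq0 (negPf a0) size_polyC a0.
Qed.

Lemma comp_monic_quadratic (R : idomainType) (c a b : R) :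
  (1%:P * 'X^2 + c%:P * 'X) \Po (a%:P * 'X^2 + b%:P * 'X) =
  witness a b (c * a) (c * b).
Proof. by rewrite /witness !comp_polyD !comp_polyM !comp_polyC comp_polyX; ring. Qed.

(* Over K the witness is (X^2 + (e/p) X) ∘ (p X^2 + Y X). *)
Lemma witness_decomposable_frac (R : idomainType) (p Y e n : R) :
  p != 0 -> Y * e = p * n -> decomposable (map_poly (@tofrac R) (witness p Y e n)).
Proof.
move=> p0 hn; have tp0 : tofrac p != 0 by rewrite tofrac_eq0.
pose c := tofrac e / tofrac p.
have ce : c * tofrac p = tofrac e by rewrite divfK.
have cn : c * tofrac Y = tofrac n.
  apply: (mulfI tp0); rewrite -tofracM -hn tofracM.
  by rewrite mulrA [tofrac p * c]mulrC ce mulrC.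
exists (1%:P * 'X^2 + c%:P * 'X), ((tofrac p)%:P * 'X^2 + (tofrac Y)%:P * 'X).
have sg := @size_quadratic0 {fraction R} 1 c (oner_neq0 _).
have sh := @size_quadratic0 {fraction R} (tofrac p) (tofrac Y) tp0.
split; first by rewrite sg.
split; first by rewrite sh.
by rewrite comp_monic_quadratic ce cn map_witness.
Qed.

(* B and T with the same sum-of-square and product data as Y and e:
   (B - Y) (B^2 + B Y - e) = 0. *)
Lemma cubic_split (R : idomainType) (B T Y e : R) :
  B ^+ 2 + T = Y ^+ 2 + e -> B * T = Y * e -> B = Y \/ e = B * (B + Y).
Proof.
move=> hsum hprod; have hT : T = Y ^+ 2 + e - B ^+ 2 by rewrite -hsum; ring.
have : (B - Y) * (B * (B + Y) - e) = 0.
  have -> : (B - Y) * (B * (B + Y) - e) = Y * e - B * T by rewrite hT; ring.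
  by rewrite hprod subrr.
by move/eqP; rewrite mulf_eq0 !subr_eq0 => /orP[] /eqP; [left | right].
Qed.

Lemma no_compatible_pair (R : idomainType) (p Y e B T : R) :
  ~ divides p Y -> ~ divides p e -> good_shift p Y e ->
  B ^+ 2 + T = Y ^+ 2 + e -> B * T = Y * e -> 2%:R * B = 2%:R * Y ->
  divides p B \/ divides p T -> False.
Proof.
move=> hY he hgood hsum hprod htwo hdiv.
have BY_absurd : B <> Y.
  move=> BY; have Te : T = e by apply: (addrI (B ^+ 2)); rewrite hsum BY.
  by case: hdiv; rewrite ?BY ?Te.
have [//|eB] := cubic_split hsum hprod.
case: hgood => [two|hchar2]; first exact/BY_absurd/(mulfI two).
case: hdiv => [[k hk]|hT].
  by apply: he; exists (k * (B + Y)); rewrite eB hk mulrA.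
have TY : T = Y * (Y + B) by apply: (addrI (B ^+ 2)); rewrite hsum eB; ring.
by apply: (hchar2 B eB); rewrite -TY.
Qed.

(* If u al^2 = p^2 with p != 0 then u is a square in K, hence in R, and its
   square root can be normalized so that d al = p. *)
Lemma leading_square_root (R : idomainType)
  (sq_descent : squares_descend R)
  (p u al : R) :
  p != 0 -> u * al ^+ 2 = p ^+ 2 -> exists d, u = d ^+ 2 /\ d * al = p.
Proof.
move=> p0 hu; have al0 : al != 0.
  apply: contra_neq p0 => al0; move/eqP: hu.
  by rewrite al0 expr0n mulr0 eq_sym expf_eq0 => /andP[_ /eqP].
have [d ud] : exists d, u = d ^+ 2.
  apply: sq_descent; exists (tofrac p / tofrac al).
  rewrite expr_div_n -[tofrac p ^+ 2]tofracXn -hu tofracM tofracXn mulfK //.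
  by rewrite expf_eq0 tofrac_eq0.
have : (d * al) ^+ 2 == p ^+ 2 by rewrite exprMn -ud hu.
rewrite eqf_sqr => /orP[] /eqP h; first by exists d.
by exists (- d); rewrite sqrrN -ud mulNr h opprK.
Qed.

(* If (u X^2 + v X + w) ∘ (al X^2 + be X + ga) had the coefficients
   p^2, 2 p Y, Y^2 + e, n in degrees 4, 3, 2, 1 (where Y e = p n), then
   B = d be and T = al (2 u ga + v), with d^2 = u and d al = p, would
   contradict [no_compatible_pair]. *)
Lemma quadratic_composition_absurd (R : idomainType)
  (sq_descent : squares_descend R)
  (p Y e n u v al be ga : R) :
  irreducible_elt p -> ~ divides p Y -> ~ divides p e -> good_shift p Y e ->
  Y * e = p * n ->
  u * al ^+ 2 = p ^+ 2 -> 2%:R * u * al * be = 2%:R * p * Y ->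
  u * (be ^+ 2 + 2%:R * al * ga) + v * al = Y ^+ 2 + e ->
  2%:R * u * be * ga + v * be = n -> False.
Proof.
move=> [p0 [_ pirr]] hY he hgood hn E4 E3 E2 E1.
have [d [ud dal]] := leading_square_root sq_descent p0 E4.
pose t := 2%:R * u * ga + v.
apply: (@no_compatible_pair R p Y e (d * be) (al * t)) => //.
- by rewrite -E2 /t ud; ring.
- by rewrite hn -dal -E1 /t; ring.
- apply: (mulfI p0); rewrite (_ : p * (2%:R * Y) = 2%:R * p * Y); last by ring.
  by rewrite -E3 ud -dal; ring.
- case: (pirr d al (esym dal)) => [du|alu].
    by right; exists (d^-1 * t); rewrite -dal mulrAC mulVKr // mulrC.
  by left; exists (al^-1 * be); rewrite -dal -mulrA mulVKr.
Qed.

Lemma witness_indecomposable (R : idomainType)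
  (sq_descent : squares_descend R)
  (p Y e n : R) :
  irreducible_elt p -> ~ divides p Y -> ~ divides p e -> good_shift p Y e ->
  Y * e = p * n -> indecomposable (witness p Y e n).
Proof.
move=> pirr hY he hgood hn; have sf := size_witness Y e n (proj1 pirr).
split=> [|[G [H [sG [sH fGH]]]]]; first by rewrite sf.
have [/quadratic_expand G_eq /quadratic_expand H_eq] :=
  quartic_decomposition_sizes sf fGH sG sH.
move: fGH; rewrite witness_quartic G_eq H_eq comp_quadratics => fGH.
have [f4 f3 f2 f1] := coef_quartic (p ^+ 2) (2%:R * p * Y) (Y ^+ 2 + e) n 0.
rewrite fGH in f4 f3 f2 f1.
have [g4 g3 g2 g1] := coef_quartic (G`_2 * H`_2 ^+ 2) (2%:R * G`_2 * H`_2 * H`_1)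
  (G`_2 * (H`_1 ^+ 2 + 2%:R * H`_2 * H`_0) + G`_1 * H`_2)
  (2%:R * G`_2 * H`_1 * H`_0 + G`_1 * H`_1)
  (G`_2 * H`_0 ^+ 2 + G`_1 * H`_0 + G`_0).
apply: (quadratic_composition_absurd sq_descent (u := G`_2) (v := G`_1)
  (al := H`_2) (be := H`_1) (ga := H`_0) pirr hY he hgood hn).
- by rewrite -g4 f4.
- by rewrite -g3 f3.
- by rewrite -g2 f2.
- by rewrite -g1 f1.
Qed.

Theorem theorem3p2 (R : idomainType) :
  (exists (r : R) (s t : seq R),
      is_factorization r s /\ is_factorization r t /\ ~ equiv_factorizations s t) ->
  (forall a : R, ~ (exists b : R, a = b ^+ 2) ->
      ~ (exists k : {fraction R}, @FracField.tofrac R a = k ^+ 2)) ->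
  exists f : {poly R},
    size f = 5%N /\ indecomposable f /\ decomposable (map_poly (@FracField.tofrac R) f).
Proof.
move=> nonunique no_new_squares.
have sq_descent : squares_descend R.
  by move=> a hk; apply: NNPP => hb; exact: no_new_squares a hb hk.
have [p [b [c [pirr cirr hb hc hbc]]]] := irreducible_not_prime nonunique.
have [Y [hY [n hn] hgood]] := good_shift_exists pirr cirr hb hc hbc.
exists (witness p Y c n); split; first exact: size_witness (proj1 pirr).
split; first exact: (witness_indecomposable sq_descent pirr hY hc hgood hn).
exact: witness_decomposable_frac (proj1 pirr) hn.
Qed.
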